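(* Let $N\ge 2$ be an integer, $\omega_0>0$, $f_0>0$, $\sigma=f_0/\omega_0^2$. Let $x_0(t),\dots,x_{N-1}(t)$ solve \[ \ddot x_0=0,\qquad \ddot x_k=\omega_0^2\,(x_{k-1}-2x_k+x_{k+1})\ (1\le k\le N-2),\qquad \ddot x_{N-1}=\omega_0^2\,(x_{N-2}-x_{N-1})+f_0, \] with $x_k(0)=0$, $\dot x_k(0)=0$ for all $k$. Then for $n=0,\dots,N-1$ and $t\ge 0$, \[ x_n(t)=\sigma\left[n-\frac{1}{2N-1}\sum_{m=1}^{2N-2}\gamma_{m,N,n}\cos(\omega_m t)\right], \] where \[ \gamma_{m,N,n}=\frac{1}{\sin^2\frac{\pi m}{4N-2}}\,\sin\frac{\pi m}{2}\,\cos\frac{\pi m}{4N-2}\,\sin\frac{\pi nm}{2N-1},\qquad \omega_m=2\omega_0\sin\frac{\pi m}{4N-2}. \] *)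

From Stdlib Require Import Reals.
From Coquelicot Require Import Coquelicot.
Open Scope R_scope.

Definition gamma_coef (m N n : nat) : R :=
  / (sin (PI * INR m / (4 * INR N - 2))) ^ 2
  * sin (PI * INR m / 2)
  * cos (PI * INR m / (4 * INR N - 2))
  * sin (PI * INR n * INR m / (2 * INR N - 1)).

Definition omega_m (w0 : R) (m N : nat) : R :=
  2 * w0 * sin (PI * INR m / (4 * INR N - 2)).

Definition chain_solution (N : nat) (w0 f0 : R) (n : nat) (t : R) : R :=
  (f0 / w0 ^ 2) *
  (INR n - / (2 * INR N - 1) *
     sum_n_m (fun m => gamma_coef m N n * cos (omega_m w0 m N * t)) 1 (2 * N - 2)).

From Stdlib Require Import Reals Lra Lia.
From Coquelicot Require Import Coquelicot.
Open Scope R_scope.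

(* Write [theta_m = pi m / (4N - 2)], so that [omega_m = 2 omega_0 sin theta_m].  Up to a factor
   independent of [n], [gamma_{m,N,n}] is [sin (2 n theta_m)], an eigenvector of the discrete
   Laplacian with eigenvalue [-4 sin^2 theta_m = -(omega_m / omega_0)^2]; it vanishes at [n = 0]
   and satisfies the free-end condition [gamma_{m,N,N} = gamma_{m,N,N-1}].  Hence the proposed
   [x_n] solves the equations of motion, the linear part [sigma n] absorbing the force [f_0] at
   the free end.  Its initial velocity is zero, and its initial position is zero because
   [sum_m gamma_{m,N,n} = (2N - 1) n]: as a function of [n] this sum has vanishing second
   differences except at the free end, where Dirichlet-kernel sums of [cos (m q pi / (2N - 1))]
   evaluate them.  Finally the difference of two solutions starts at rest and conserves the
   energy [sum_k v_k^2 + omega_0^2 sum_k (x_{k+1} - x_k)^2], so it vanishes identically. *)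

(* Coquelicot states these for abstract monoids and normed modules; the real-valued
   specializations below let [rewrite], [apply] and [ring] see plain real expressions. *)
Lemma sum_n_m_ext_R (f g : nat -> R) (a b : nat) :
  (forall m, (a <= m <= b)%nat -> f m = g m) -> sum_n_m f a b = sum_n_m g a b.
Proof. apply sum_n_m_ext_loc. Qed.

Lemma sum_n_m_Rplus (f g : nat -> R) (a b : nat) :
  sum_n_m (fun m => f m + g m) a b = sum_n_m f a b + sum_n_m g a b.
Proof. exact (sum_n_m_plus f g a b). Qed.

Lemma sum_n_m_Rmult_l (c : R) (f : nat -> R) (a b : nat) :
  sum_n_m (fun m => c * f m) a b = c * sum_n_m f a b.
Proof. exact (sum_n_m_mult_l c f a b). Qed.

Lemma sum_n_m_Rminus (f g : nat -> R) (a b : nat) :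
  sum_n_m (fun m => f m - g m) a b = sum_n_m f a b - sum_n_m g a b :> R.
Proof.
  rewrite (sum_n_m_ext_R _ (fun m => f m + (-1) * g m)) by (intros; ring).
  rewrite sum_n_m_Rplus, sum_n_m_Rmult_l. ring.
Qed.

Lemma sum_f_R0_nonneg_eq_0 (a : nat -> R) (n : nat) :
  (forall k, 0 <= a k) -> sum_f_R0 a n = 0 -> forall k, (k <= n)%nat -> a k = 0.
Proof.
  intro Ha. induction n as [|n IH]; intros Hs k Hk; simpl in Hs.
  - replace k with 0%nat by lia. exact Hs.
  - pose proof (cond_pos_sum a n Ha). pose proof (Ha (S n)).
    destruct (Nat.eq_dec k (S n)) as [-> | Hne]; [lra |].
    apply IH; [lra | lia].
Qed.

Lemma is_derive_Rplus (f g : R -> R) (df dg x : R) :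
  is_derive f x df -> is_derive g x dg -> is_derive (fun t => f t + g t) x (df + dg).
Proof. intros Hf Hg. exact (@is_derive_plus R_AbsRing R_NormedModule f g x df dg Hf Hg). Qed.

Lemma is_derive_Rminus (f g : R -> R) (df dg x : R) :
  is_derive f x df -> is_derive g x dg -> is_derive (fun t => f t - g t) x (df - dg).
Proof. intros Hf Hg. exact (@is_derive_minus R_AbsRing R_NormedModule f g x df dg Hf Hg). Qed.

Lemma is_derive_Rconst (c x : R) : is_derive (fun _ => c) x 0.
Proof. exact (@is_derive_const R_AbsRing R_NormedModule c x). Qed.

Lemma is_derive_sum_n_m (f : nat -> R -> R) (df : nat -> R) (a b : nat) (x : R) :
  (forall k, is_derive (f k) x (df k)) ->
  is_derive (fun t => sum_n_m (fun k => f k t) a b) x (sum_n_m df a b).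
Proof.
  intro Hf. induction b as [|b IH].
  - destruct a as [|a].
    + rewrite sum_n_n. apply (is_derive_ext (f 0%nat)); [|apply Hf].
      intro t. now rewrite sum_n_n.
    + rewrite sum_n_m_zero by lia.
      apply (is_derive_ext (fun _ => 0)); [|apply is_derive_Rconst].
      intro t. now rewrite sum_n_m_zero by lia.
  - destruct (Compare_dec.le_lt_dec a (S b)) as [Hab|Hab].
    + rewrite sum_n_Sm by exact Hab.
      apply (is_derive_ext (fun t => sum_n_m (fun k => f k t) a b + f (S b) t)).
      { intro t. now rewrite sum_n_Sm. }
      apply is_derive_Rplus; [exact IH | apply Hf].
    + rewrite sum_n_m_zero by lia.
      apply (is_derive_ext (fun _ => 0)); [|apply is_derive_Rconst].
      intro t. now rewrite sum_n_m_zero by lia.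
Qed.

Lemma is_derive_sum_f_R0 (f : nat -> R -> R) (df : nat -> R) (n : nat) (x : R) :
  (forall k, (k <= n)%nat -> is_derive (f k) x (df k)) ->
  is_derive (fun t => sum_f_R0 (fun k => f k t) n) x (sum_f_R0 df n).
Proof.
  induction n as [|n IH]; intro Hf; simpl.
  - apply Hf. lia.
  - apply is_derive_Rplus; [apply IH; intros; apply Hf |apply Hf]; lia.
Qed.

Lemma is_derive_square (f : R -> R) (x l : R) :
  is_derive f x l -> is_derive (fun t => f t ^ 2) x (2 * f x * l).
Proof.
  intro Hf. pose proof (is_derive_pow f 2 x l Hf) as H.
  simpl in H. now replace (2 * f x * l) with ((1 + 1) * l * (f x * 1)) by ring.
Qed.

Lemma constant_on_nonneg (f : R -> R) :
  (forall t, 0 <= t -> is_derive f t 0) -> forall t, 0 <= t -> f t = f 0.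
Proof.
  intros Hf t Ht. destruct (Req_dec t 0) as [-> | Hne]; [reflexivity |].
  symmetry. apply (eq_is_derive (V := R_NormedModule)); [| lra].
  intros s Hs. apply Hf. lra.
Qed.

(** * Trigonometric sums *)

Lemma sin_INR_mult_PI (m : nat) : sin (INR m * PI) = 0.
Proof. apply sin_eq_0_1. exists (Z.of_nat m). now rewrite INR_IZR_INZ. Qed.

Lemma cos_INR_mult_PI (m : nat) : cos (INR m * PI) = (-1) ^ m.
Proof.
  induction m as [|m IH].
  - simpl. rewrite Rmult_0_l. apply cos_0.
  - rewrite S_INR, Rmult_plus_distr_r, Rmult_1_l, neg_cos, IH. simpl. ring.
Qed.

Lemma sin_cos_sin_expand (A B C : R) :
  sin A * cos C * sin B =
  / 4 * (cos (A - B - C) + cos (A - B + C) - cos (A + B - C) - cos (A + B + C)).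
Proof.
  rewrite (cos_minus (A - B)), (cos_plus (A - B)), (cos_minus (A + B)), (cos_plus (A + B)).
  rewrite cos_minus, sin_minus, cos_plus, sin_plus. field.
Qed.

Lemma dirichlet_cos_sum (x : R) (K : nat) :
  2 * sin (x / 2) * sum_n_m (fun m => cos (INR m * x)) 1 K =
  sin ((INR K + / 2) * x) - sin (x / 2).
Proof.
  induction K as [|K IH].
  - rewrite sum_n_m_zero by lia. change (@zero _) with 0. simpl.
    replace ((0 + / 2) * x) with (x / 2) by field. ring.
  - rewrite sum_n_Sm by lia. change (@plus _ ?a ?b) with (Rplus a b).
    rewrite Rmult_plus_distr_l, IH.
    replace ((INR (S K) + / 2) * x) with (INR (S K) * x + x / 2) by (rewrite S_INR; field).
    replace ((INR K + / 2) * x) with (INR (S K) * x - x / 2) by (rewrite S_INR; field).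
    rewrite sin_plus, sin_minus. ring.
Qed.

Definition cos_multiple_sum (L q : nat) : R :=
  sum_n_m (fun m => cos (INR m * (INR q * PI / INR L))) 1 (L - 1).

Lemma cos_multiple_sum_0 (L : nat) : (1 <= L)%nat -> cos_multiple_sum L 0 = INR L - 1.
Proof.
  intro HL. unfold cos_multiple_sum.
  rewrite (sum_n_m_ext _ (fun _ => 1)).
  - rewrite sum_n_m_const. change (scal ?a ?b) with (a * b).
    replace (S (L - 1) - 1)%nat with (L - 1)%nat by lia.
    rewrite minus_INR by lia. simpl. ring.
  - intro m. simpl. unfold Rdiv. rewrite !Rmult_0_l, Rmult_0_r. apply cos_0.
Qed.

Lemma cos_multiple_sum_pos (L q : nat) : (0 < q < 2 * L)%nat ->
  cos_multiple_sum L q = - (1 + (-1) ^ q) / 2.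
Proof.
  intros [Hq HqL]. unfold cos_multiple_sum.
  assert (HL : 0 < INR L) by (apply lt_0_INR; lia).
  set (x := INR q * PI / INR L).
  assert (Hs : 0 < sin (x / 2)).
  { apply lt_INR in Hq, HqL. rewrite mult_INR in HqL. simpl in Hq, HqL.
    pose proof PI_RGT_0. apply sin_gt_0; unfold x.
    - apply Rdiv_lt_0_compat; [apply Rdiv_lt_0_compat|]; nra.
    - apply (Rmult_lt_reg_r (2 * INR L)); [lra|].
      replace (INR q * PI / INR L / 2 * (2 * INR L)) with (INR q * PI) by (field; lra).
      nra. }
  pose proof (dirichlet_cos_sum x (L - 1)) as D.
  replace ((INR (L - 1) + / 2) * x) with (INR q * PI - x / 2) in D
    by (unfold x; rewrite minus_INR by lia; simpl; field; lra).
  rewrite sin_minus, sin_INR_mult_PI, cos_INR_mult_PI in D.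
  apply (Rmult_eq_reg_l (2 * sin (x / 2))); [rewrite D; field | lra].
Qed.

Lemma cos_multiple_sum_succ_pos (L q : nat) : (0 < q)%nat -> (S q < 2 * L)%nat ->
  cos_multiple_sum L q + cos_multiple_sum L (S q) = -1.
Proof.
  intros Hq HqL. rewrite !cos_multiple_sum_pos by lia. simpl. field.
Qed.

(** * The mode coefficients *)

Lemma second_difference_zero_linear (s : nat -> R) (K : nat) (c : R) :
  s 0%nat = 0 ->
  (forall j, (j < K)%nat -> s j - 2 * s (S j) + s (S (S j)) = 0) ->
  s (S K) - s K = c ->
  forall n, (n <= S K)%nat -> s n = c * INR n.
Proof.
  intros H0 Hlap Hlast.
  assert (Hstep : forall i, (i <= K)%nat -> s (S (K - i)) - s (K - i)%nat = c).
  { induction i as [|i IH]; intro Hi.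
    - now rewrite Nat.sub_0_r.
    - replace (K - i)%nat with (S (K - S i)) in IH by lia.
      specialize (Hlap (K - S i)%nat ltac:(lia)). specialize (IH ltac:(lia)). lra. }
  induction n as [|n IH]; intro Hn.
  - simpl. rewrite H0. ring.
  - specialize (Hstep (K - n)%nat ltac:(lia)).
    replace (K - (K - n))%nat with n in Hstep by lia.
    rewrite S_INR. specialize (IH ltac:(lia)). lra.
Qed.

Definition mode_angle (N m : nat) : R := PI * INR m / (4 * INR N - 2).

Lemma sin_mode_angle_pos (N m : nat) : (1 <= m)%nat -> (m < 4 * N - 2)%nat ->
  0 < sin (mode_angle N m).
Proof.
  intros Hm HmN. pose proof PI_RGT_0.
  assert (HN : 4 * INR N - 2 > INR m).
  { assert (H2 : (2 <= 4 * N)%nat) by lia.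
    apply lt_INR in HmN. rewrite minus_INR, mult_INR in HmN by lia. simpl in HmN. lra. }
  apply le_INR in Hm. simpl in Hm.
  unfold mode_angle. apply sin_gt_0.
  - apply Rdiv_lt_0_compat; nra.
  - apply (Rmult_lt_reg_r (4 * INR N - 2)); [lra|].
    replace (PI * INR m / (4 * INR N - 2) * (4 * INR N - 2)) with (PI * INR m) by (field; lra).
    nra.
Qed.

Lemma gamma_coef_mode_angle (m N n : nat) : (1 <= N)%nat ->
  gamma_coef m N n = / sin (mode_angle N m) ^ 2 * sin (PI * INR m / 2)
                     * cos (mode_angle N m) * sin (2 * INR n * mode_angle N m).
Proof.
  intro HN. apply le_INR in HN. simpl in HN.
  unfold gamma_coef, mode_angle. do 2 f_equal. field. lra.
Qed.

Lemma gamma_coef_0 (m N : nat) : gamma_coef m N 0 = 0.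
Proof.
  unfold gamma_coef. simpl. unfold Rdiv. rewrite !Rmult_0_r, !Rmult_0_l, sin_0. ring.
Qed.

Lemma gamma_coef_second_difference (m N n : nat) : (1 <= N)%nat ->
  gamma_coef m N n - 2 * gamma_coef m N (S n) + gamma_coef m N (S (S n))
  = -4 * sin (mode_angle N m) ^ 2 * gamma_coef m N (S n).
Proof.
  intro HN. rewrite !gamma_coef_mode_angle by exact HN.
  set (a := mode_angle N m). set (b := 2 * INR (S n) * a).
  replace (2 * INR n * a) with (b - 2 * a) by (unfold b; rewrite S_INR; ring).
  replace (2 * INR (S (S n)) * a) with (b + 2 * a) by (unfold b; rewrite !S_INR; ring).
  rewrite sin_minus, sin_plus, cos_2a_sin. simpl. ring.
Qed.

(* [2 N theta_m = pi m - 2 (N - 1) theta_m]; the factor [sin (pi m / 2)] kills even [m],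
   and [cos (pi m) = -1] for odd [m]. *)
Lemma gamma_coef_free_end (m M : nat) :
  gamma_coef m (S M) (S M) = gamma_coef m (S M) M.
Proof.
  rewrite !gamma_coef_mode_angle by lia.
  set (a := mode_angle (S M) m).
  assert (E : 2 * INR (S M) * a = INR m * PI - 2 * INR M * a).
  { unfold a, mode_angle. rewrite S_INR. pose proof (pos_INR M). field. lra. }
  rewrite E, sin_minus, sin_INR_mult_PI, cos_INR_mult_PI.
  replace (PI * INR m / 2) with (INR m * (PI / 2)) by field.
  destruct (Nat.Even_or_Odd m) as [[k ->] | [k ->]].
  - rewrite mult_INR.
    replace (INR 2 * INR k * (PI / 2)) with (INR k * PI) by (simpl; field).
    rewrite sin_INR_mult_PI. ring.
  - rewrite pow_add, pow_mult.
    replace ((-1) ^ 2) with 1 by ring. rewrite pow1. ring.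
Qed.

Definition gamma_sum (N n : nat) : R :=
  sum_n_m (fun m => gamma_coef m N n) 1 (2 * N - 2).

Definition weighted_gamma_sum (N n : nat) : R :=
  sum_n_m (fun m => sin (mode_angle N m) ^ 2 * gamma_coef m N n) 1 (2 * N - 2).

Lemma weighted_gamma_sum_cos_sums (N n : nat) : (n < N)%nat ->
  weighted_gamma_sum N n =
  / 4 * (cos_multiple_sum (2 * N - 1) (N - n - 1) + cos_multiple_sum (2 * N - 1) (N - n)
         - (cos_multiple_sum (2 * N - 1) (N + n - 1) + cos_multiple_sum (2 * N - 1) (N + n))).
Proof.
  intro Hn.
  assert (HL : INR (2 * N - 1) = 2 * INR N - 1)
    by (rewrite minus_INR, mult_INR by lia; simpl; ring).
  assert (HN : 1 <= INR N) by (apply (le_INR 1); lia).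
  unfold weighted_gamma_sum, cos_multiple_sum.
  replace (2 * N - 1 - 1)%nat with (2 * N - 2)%nat by lia.
  rewrite <- !sum_n_m_Rplus, <- sum_n_m_Rminus, <- sum_n_m_Rmult_l.
  apply sum_n_m_ext_R. intros m [Hm1 Hm2].
  assert (Hs : 0 < sin (mode_angle N m)) by (apply sin_mode_angle_pos; lia).
  rewrite gamma_coef_mode_angle by lia.
  replace (sin (mode_angle N m) ^ 2 *
           (/ sin (mode_angle N m) ^ 2 * sin (PI * INR m / 2) * cos (mode_angle N m)
            * sin (2 * INR n * mode_angle N m)))
    with (sin (PI * INR m / 2) * cos (mode_angle N m) * sin (2 * INR n * mode_angle N m))
    by (field; lra).
  rewrite sin_cos_sin_expand, HL.
  rewrite !minus_INR, !plus_INR by lia. simpl.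
  unfold mode_angle.
  match goal with
  | |- _ * (cos ?a + cos ?b - cos ?c - cos ?d) = _ * (cos ?a' + cos ?b' - (cos ?c' + cos ?d')) =>
      replace a with a' by (field; lra); replace b with b' by (field; lra);
      replace c with c' by (field; lra); replace d with d' by (field; lra)
  end.
  ring.
Qed.

Lemma weighted_gamma_sum_interior (N n : nat) : (1 <= n)%nat -> (n + 2 <= N)%nat ->
  weighted_gamma_sum N n = 0.
Proof.
  intros Hn HnN. rewrite weighted_gamma_sum_cos_sums by lia.
  set (p := (N - n - 1)%nat). set (q := (N + n - 1)%nat).
  replace (N - n)%nat with (S p) by lia.
  replace (N + n)%nat with (S q) by lia.
  rewrite !cos_multiple_sum_succ_pos by lia. ring.
Qed.

Lemma weighted_gamma_sum_last (N : nat) : (2 <= N)%nat ->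
  weighted_gamma_sum N (N - 1) = (2 * INR N - 1) / 4.
Proof.
  intro HN. rewrite weighted_gamma_sum_cos_sums by lia.
  replace (N - (N - 1) - 1)%nat with 0%nat by lia.
  replace (N - (N - 1))%nat with 1%nat by lia.
  set (q := (N + (N - 1) - 1)%nat).
  replace (N + (N - 1))%nat with (S q) by lia.
  rewrite cos_multiple_sum_0, cos_multiple_sum_succ_pos, (cos_multiple_sum_pos _ 1) by lia.
  rewrite minus_INR, mult_INR by lia. simpl. field.
Qed.

Lemma gamma_sum_second_difference (N j : nat) : (1 <= N)%nat ->
  gamma_sum N j - 2 * gamma_sum N (S j) + gamma_sum N (S (S j))
  = -4 * weighted_gamma_sum N (S j).
Proof.
  intro HN. unfold gamma_sum, weighted_gamma_sum.
  rewrite <- sum_n_m_Rmult_l, <- sum_n_m_Rmult_l, <- sum_n_m_Rminus, <- sum_n_m_Rplus.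
  apply sum_n_m_ext_R. intros m _.
  rewrite gamma_coef_second_difference by exact HN. ring.
Qed.

Lemma gamma_sum_linear (N n : nat) : (2 <= N)%nat -> (n <= N - 1)%nat ->
  gamma_sum N n = (2 * INR N - 1) * INR n.
Proof.
  intros HN Hn. destruct N as [|[|M]]; try lia.
  apply (second_difference_zero_linear _ M); [| | | simpl in Hn; lia].
  - unfold gamma_sum. rewrite (sum_n_m_ext _ (fun _ => 0)) by (intro; apply gamma_coef_0).
    rewrite sum_n_m_const. apply Rmult_0_r.
  - intros j Hj. rewrite gamma_sum_second_difference, weighted_gamma_sum_interior by lia. ring.
  - pose proof (gamma_sum_second_difference (S (S M)) M ltac:(lia)) as Hlap.
    pose proof (weighted_gamma_sum_last (S (S M)) ltac:(lia)) as Hend.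
    replace (S (S M) - 1)%nat with (S M) in Hend by lia.
    assert (Hfree : gamma_sum (S (S M)) (S (S M)) = gamma_sum (S (S M)) (S M)).
    { unfold gamma_sum. apply sum_n_m_ext. intro m. apply gamma_coef_free_end. }
    lra.
Qed.

(** * The closed form solves the equations of motion *)

Definition mode_sum (N : nat) (w0 : R) (n : nat) (t : R) : R :=
  sum_n_m (fun m => gamma_coef m N n * cos (omega_m w0 m N * t)) 1 (2 * N - 2).

Lemma chain_solution_mode_sum (N : nat) (w0 f0 : R) (n : nat) (t : R) :
  chain_solution N w0 f0 n t = f0 / w0 ^ 2 * (INR n - / (2 * INR N - 1) * mode_sum N w0 n t).
Proof. reflexivity. Qed.

Definition chain_velocity (N : nat) (w0 f0 : R) (n : nat) (t : R) : R :=
  (f0 / w0 ^ 2) * (/ (2 * INR N - 1) *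
    sum_n_m (fun m => gamma_coef m N n * omega_m w0 m N * sin (omega_m w0 m N * t)) 1 (2 * N - 2)).

Definition chain_acceleration (N : nat) (w0 f0 : R) (n : nat) (t : R) : R :=
  (f0 / w0 ^ 2) * (/ (2 * INR N - 1) *
    sum_n_m (fun m => gamma_coef m N n * omega_m w0 m N ^ 2 * cos (omega_m w0 m N * t)) 1 (2 * N - 2)).

Lemma is_derive_chain_solution (N : nat) (w0 f0 : R) (n : nat) (t : R) :
  is_derive (chain_solution N w0 f0 n) t (chain_velocity N w0 f0 n t).
Proof.
  pose proof (is_derive_sum_n_m
    (fun m t => gamma_coef m N n * cos (omega_m w0 m N * t))
    (fun m => -1 * (gamma_coef m N n * omega_m w0 m N * sin (omega_m w0 m N * t)))
    1 (2 * N - 2) t) as Hs.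
  rewrite sum_n_m_Rmult_l in Hs.
  unfold chain_solution, chain_velocity.
  match goal with |- is_derive _ _ (?c * (?d * ?S)) =>
    replace (c * (d * S)) with (c * (0 - d * (-1 * S))) by ring end.
  apply is_derive_scal, is_derive_Rminus; [apply is_derive_Rconst|].
  apply is_derive_scal, Hs. intro m. auto_derive; [exact I | ring].
Qed.

Lemma is_derive_chain_velocity (N : nat) (w0 f0 : R) (n : nat) (t : R) :
  is_derive (chain_velocity N w0 f0 n) t (chain_acceleration N w0 f0 n t).
Proof.
  unfold chain_velocity, chain_acceleration.
  apply is_derive_scal, is_derive_scal, is_derive_sum_n_m.
  intro m. auto_derive; [exact I | ring].
Qed.

Lemma chain_solution_at_0 (N : nat) (w0 f0 : R) (n : nat) :
  (2 <= N)%nat -> (n <= N - 1)%nat -> chain_solution N w0 f0 n 0 = 0.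
Proof.
  intros HN Hn. rewrite chain_solution_mode_sum.
  assert (H0 : mode_sum N w0 n 0 = gamma_sum N n).
  { apply sum_n_m_ext_R. intros m _. rewrite Rmult_0_r, cos_0. ring. }
  assert (HN1 : 1 < INR N) by (apply (lt_INR 1); lia).
  rewrite H0, gamma_sum_linear, <- Rmult_assoc, Rinv_l by (assumption || lra). ring.
Qed.

Lemma chain_velocity_at_0 (N : nat) (w0 f0 : R) (n : nat) : chain_velocity N w0 f0 n 0 = 0.
Proof.
  unfold chain_velocity. rewrite (sum_n_m_ext_R _ (fun _ => 0 * 0)).
  - rewrite sum_n_m_Rmult_l. ring.
  - intros m _. rewrite Rmult_0_r, sin_0. ring.
Qed.

Lemma chain_acceleration_0 (N : nat) (w0 f0 t : R) : chain_acceleration N w0 f0 0 t = 0.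
Proof.
  unfold chain_acceleration. rewrite (sum_n_m_ext_R _ (fun _ => 0 * 0)).
  - rewrite sum_n_m_Rmult_l. ring.
  - intros m _. rewrite gamma_coef_0. ring.
Qed.

Lemma mode_sum_second_difference (N : nat) (w0 : R) (j : nat) (t : R) :
  (1 <= N)%nat -> w0 <> 0 ->
  mode_sum N w0 j t - 2 * mode_sum N w0 (S j) t + mode_sum N w0 (S (S j)) t =
  - / w0 ^ 2 * sum_n_m (fun m => gamma_coef m N (S j) * omega_m w0 m N ^ 2
                                 * cos (omega_m w0 m N * t)) 1 (2 * N - 2).
Proof.
  intros HN Hw. unfold mode_sum.
  rewrite <- sum_n_m_Rmult_l, <- sum_n_m_Rmult_l, <- sum_n_m_Rminus, <- sum_n_m_Rplus.
  apply sum_n_m_ext_R. intros m _.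
  transitivity ((gamma_coef m N j - 2 * gamma_coef m N (S j) + gamma_coef m N (S (S j)))
                * cos (omega_m w0 m N * t)); [ring|].
  rewrite gamma_coef_second_difference by exact HN.
  unfold omega_m, mode_angle. field. exact Hw.
Qed.

Lemma chain_solution_second_difference (N : nat) (w0 f0 : R) (k : nat) (t : R) :
  (1 <= N)%nat -> (1 <= k)%nat -> w0 <> 0 ->
  w0 ^ 2 * (chain_solution N w0 f0 (k - 1) t - 2 * chain_solution N w0 f0 k t
            + chain_solution N w0 f0 (k + 1) t) = chain_acceleration N w0 f0 k t.
Proof.
  intros HN Hk Hw. destruct k as [|j]; [lia|].
  replace (S j - 1)%nat with j by lia. replace (S j + 1)%nat with (S (S j)) by lia.
  pose proof (mode_sum_second_difference N w0 j t HN Hw) as Hd.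
  unfold chain_acceleration. rewrite !chain_solution_mode_sum.
  match type of Hd with _ = _ * ?X =>
    replace X with (- w0 ^ 2 * (mode_sum N w0 j t - 2 * mode_sum N w0 (S j) t
                                 + mode_sum N w0 (S (S j)) t)) by (rewrite Hd; field; exact Hw) end.
  apply (le_INR 1) in HN. simpl in HN.
  rewrite !S_INR. field. lra.
Qed.

Lemma chain_solution_free_end (N : nat) (w0 f0 : R) (t : R) : (2 <= N)%nat -> w0 <> 0 ->
  w0 ^ 2 * (chain_solution N w0 f0 (N - 2) t - chain_solution N w0 f0 (N - 1) t) + f0
  = chain_acceleration N w0 f0 (N - 1) t.
Proof.
  intros HN Hw. destruct N as [|[|M]]; [lia | lia |].
  replace (S (S M) - 2)%nat with M by lia. replace (S (S M) - 1)%nat with (S M) by lia.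
  rewrite <- (chain_solution_second_difference _ _ _ (S M)) by (lia || exact Hw).
  replace (S M - 1)%nat with M by lia. replace (S M + 1)%nat with (S (S M)) by lia.
  assert (Hfree : mode_sum (S (S M)) w0 (S (S M)) t = mode_sum (S (S M)) w0 (S M) t).
  { apply sum_n_m_ext_R. intros m _. now rewrite gamma_coef_free_end. }
  pose proof (pos_INR M).
  rewrite !chain_solution_mode_sum, Hfree, !S_INR. field. split; [lra | exact Hw].
Qed.

(** * Uniqueness by energy conservation *)

(* Summation by parts: with the first mass at rest, the power of the spring forces up to mass
   [K] is minus the rate of change of their spring energy plus the flux through spring [K]. *)
Lemma chain_power_flux (p P u : nat -> R) (w : R) (K : nat) :
  p 0%nat = 0 ->
  (forall k, (k < K)%nat -> P (S k) = w * (u k - 2 * u (S k) + u (S (S k)))) ->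
  sum_f_R0 (fun k => p k * P k) K + w * sum_f_R0 (fun k => (u (S k) - u k) * (p (S k) - p k)) K
  = w * (u (S K) - u K) * p (S K).
Proof.
  intros Hp0 HP. induction K as [|K IH]; simpl.
  - rewrite Hp0. ring.
  - rewrite HP by lia. specialize (IH (fun k Hk => HP k ltac:(lia))). nra.
Qed.

Section ChainAtRest.

Variables (N : nat) (w : R) (u p : nat -> R -> R).
Hypothesis HN : (2 <= N)%nat.
Hypothesis Hu : forall k t, (k < N)%nat -> is_derive (u k) t (p k t).
Hypothesis Hp_first : forall t, 0 <= t -> is_derive (p 0%nat) t 0.
Hypothesis Hp_mid : forall k t, (1 <= k)%nat -> (k <= N - 2)%nat -> 0 <= t ->
  is_derive (p k) t (w ^ 2 * (u (k - 1)%nat t - 2 * u k t + u (k + 1)%nat t)).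
Hypothesis Hp_last : forall t, 0 <= t ->
  is_derive (p (N - 1)%nat) t (w ^ 2 * (u (N - 2)%nat t - u (N - 1)%nat t)).
Hypothesis Hu0 : forall k, (k < N)%nat -> u k 0 = 0.
Hypothesis Hp0 : forall k, (k < N)%nat -> p k 0 = 0.

Definition chain_energy (t : R) : R :=
  sum_f_R0 (fun k => p k t ^ 2) (N - 1)
  + w ^ 2 * sum_f_R0 (fun k => (u (S k) t - u k t) ^ 2) (N - 2).

Lemma is_derive_velocity (k : nat) (t : R) :
  (k < N)%nat -> 0 <= t -> is_derive (p k) t (Derive (p k) t).
Proof.
  intros Hk Ht.
  destruct (Nat.eq_dec k 0) as [-> | Hk0];
    [| destruct (Nat.eq_dec k (N - 1)) as [-> | Hk1]];
    [pose proof (Hp_first t Ht) as H | pose proof (Hp_last t Ht) as H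
    | pose proof (Hp_mid k t ltac:(lia) ltac:(lia) Ht) as H];
    now rewrite (is_derive_unique _ _ _ H).
Qed.

Lemma first_velocity_zero (t : R) : 0 <= t -> p 0%nat t = 0.
Proof.
  intro Ht. rewrite (constant_on_nonneg (p 0%nat) Hp_first t Ht). apply Hp0. lia.
Qed.

Lemma is_derive_chain_energy (t : R) : 0 <= t -> is_derive chain_energy t 0.
Proof.
  intro Ht. set (P := fun k => Derive (p k) t).
  assert (HE : is_derive chain_energy t
    (sum_f_R0 (fun k => 2 * p k t * P k) (N - 1)
     + w ^ 2 * sum_f_R0 (fun k => 2 * (u (S k) t - u k t) * (p (S k) t - p k t)) (N - 2))).
  { apply is_derive_Rplus; [| apply is_derive_scal]; apply is_derive_sum_f_R0; intros k Hk.
    - apply is_derive_square, is_derive_velocity; [lia | exact Ht].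
    - apply (is_derive_square (fun s => u (S k) s - u k s)).
      apply is_derive_Rminus; apply Hu; lia. }
  set (M := (N - 2)%nat) in HE. replace (N - 1)%nat with (S M) in HE by lia.
  assert (Hflux : sum_f_R0 (fun k => p k t * P k) M
      + w ^ 2 * sum_f_R0 (fun k => (u (S k) t - u k t) * (p (S k) t - p k t)) M
      = w ^ 2 * (u (S M) t - u M t) * p (S M) t).
  { apply (chain_power_flux (fun k => p k t) P (fun k => u k t)).
    - now apply first_velocity_zero.
    - intros k Hk. unfold P.
      rewrite (is_derive_unique _ _ _ (Hp_mid (S k) t ltac:(lia) ltac:(lia) Ht)).
      now replace (S k - 1)%nat with k by lia; rewrite Nat.add_1_r. }
  assert (Hlast : P (S M) = w ^ 2 * (u M t - u (S M) t)).
  { unfold P, M. replace (S (N - 2)) with (N - 1)%nat by lia.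
    exact (is_derive_unique _ _ _ (Hp_last t Ht)). }
  rewrite (sum_eq (fun k => 2 * p k t * P k) (fun k => p k t * P k * 2)),
    (sum_eq (fun k => 2 * (u (S k) t - u k t) * (p (S k) t - p k t))
            (fun k => (u (S k) t - u k t) * (p (S k) t - p k t) * 2)),
    <- !scal_sum in HE by (intros; ring).
  simpl in HE. rewrite Hlast in HE.
  replace 0 with (2 * (sum_f_R0 (fun k => p k t * P k) M + p (S M) t * (w ^ 2 * (u M t - u (S M) t)))
    + w ^ 2 * (2 * sum_f_R0 (fun k => (u (S k) t - u k t) * (p (S k) t - p k t)) M));
    [exact HE | nra].
Qed.

Lemma chain_energy_zero (t : R) : 0 <= t -> chain_energy t = 0.
Proof.
  intro Ht. rewrite (constant_on_nonneg chain_energy is_derive_chain_energy t Ht).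
  unfold chain_energy.
  rewrite (sum_eq _ (fun _ => 0)), (sum_eq (fun k => (u (S k) 0 - u k 0) ^ 2) (fun _ => 0)).
  - rewrite !sum_cte. ring.
  - intros k Hk. rewrite !Hu0 by lia. ring.
  - intros k Hk. rewrite Hp0 by lia. ring.
Qed.

Lemma velocity_zero (k : nat) (t : R) : (k < N)%nat -> 0 <= t -> p k t = 0.
Proof.
  intros Hk Ht. pose proof (chain_energy_zero t Ht) as HE. unfold chain_energy in HE.
  assert (Hd : 0 <= sum_f_R0 (fun k => (u (S k) t - u k t) ^ 2) (N - 2))
    by (apply cond_pos_sum; intro; apply pow2_ge_0).
  assert (Hv : 0 <= sum_f_R0 (fun k => p k t ^ 2) (N - 1))
    by (apply cond_pos_sum; intro; apply pow2_ge_0).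
  assert (Hw : 0 <= w ^ 2) by apply pow2_ge_0.
  assert (Hp2 : p k t ^ 2 = 0).
  { apply (sum_f_R0_nonneg_eq_0 (fun k => p k t ^ 2) (N - 1)); [intro; apply pow2_ge_0 | nra | lia]. }
  nra.
Qed.

Lemma chain_at_rest (k : nat) (t : R) : (k < N)%nat -> 0 <= t -> u k t = 0.
Proof.
  intros Hk Ht. rewrite <- (Hu0 k Hk).
  apply constant_on_nonneg; [| exact Ht].
  intros s Hs. rewrite <- (velocity_zero k s Hk Hs). now apply Hu.
Qed.

End ChainAtRest.

Theorem lemma2 (N : nat) (w0 f0 : R) (x v : nat -> R -> R)
  (HN : (2 <= N)%nat) (Hw0 : 0 < w0) (Hf0 : 0 < f0)
  (Hx : forall k t, (k < N)%nat -> is_derive (x k) t (v k t))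
  (H0 : forall t, 0 <= t -> is_derive (v 0%nat) t 0)
  (Hmid : forall k t, (1 <= k)%nat -> (k <= N - 2)%nat -> 0 <= t ->
     is_derive (v k) t (w0 ^ 2 * (x (k - 1)%nat t - 2 * x k t + x (k + 1)%nat t)))
  (Hlast : forall t, 0 <= t ->
     is_derive (v (N - 1)%nat) t (w0 ^ 2 * (x (N - 2)%nat t - x (N - 1)%nat t) + f0))
  (Hx0 : forall k, (k < N)%nat -> x k 0 = 0)
  (Hv0 : forall k, (k < N)%nat -> v k 0 = 0) :
  forall n t, (n <= N - 1)%nat -> 0 <= t -> x n t = chain_solution N w0 f0 n t.
Proof.
  intros n t Hn Ht.
  assert (Hw : w0 <> 0) by lra.
  set (y := chain_solution N w0 f0). set (a := chain_acceleration N w0 f0).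
  enough (Hrest : x n t - y n t = 0) by lra.
  apply (chain_at_rest N w0 (fun k s => x k s - y k s)
           (fun k s => v k s - chain_velocity N w0 f0 k s)); try lia.
  - intros k s Hk. apply is_derive_Rminus; [now apply Hx | apply is_derive_chain_solution].
  - intros s Hs.
    pose proof (is_derive_Rminus _ _ _ _ s (H0 s Hs) (is_derive_chain_velocity N w0 f0 0 s)) as D.
    now rewrite chain_acceleration_0, Rminus_0_r in D.
  - intros k s Hk1 Hk2 Hs.
    replace (w0 ^ 2 * _) with (w0 ^ 2 * (x (k - 1)%nat s - 2 * x k s + x (k + 1)%nat s) - a k s)
      by (unfold a, y; rewrite <- chain_solution_second_difference by (lia || exact Hw); ring).
    apply is_derive_Rminus; [now apply Hmid | apply is_derive_chain_velocity].
  - intros s Hs.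
    replace (w0 ^ 2 * _) with (w0 ^ 2 * (x (N - 2)%nat s - x (N - 1)%nat s) + f0 - a (N - 1)%nat s)
      by (unfold a, y; rewrite <- chain_solution_free_end by (lia || exact Hw); ring).
    apply is_derive_Rminus; [now apply Hlast | apply is_derive_chain_velocity].
  - intros k Hk. unfold y. rewrite Hx0, chain_solution_at_0 by lia. ring.
  - intros k Hk. rewrite Hv0, chain_velocity_at_0 by lia. ring.
  - exact Ht.
Qed.
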